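(* Let $A\in\mathbb{R}^{m\times N}$ with $N=pn$, let $\mathbf{x}\in\mathbb{R}^N$ be block $k$-sparse ($\lVert\mathbf{x}\rVert_{2,0}\le k$), and let $\mathbf{y}=A\mathbf{x}+\boldsymbol{\epsilon}$. For any $q\in(1,\infty]$: 1) If $\lVert\boldsymbol{\epsilon}\rVert_2\le\zeta$, then the solution $\hat{\mathbf{x}}$ of the block basis pursuit $\min_{\mathbf{z}}\lVert\mathbf{z}\rVert_{2,1}$ s.t. $\lVert\mathbf{y}-A\mathbf{z}\rVert_2\le\zeta$ obeys $$\lVert\hat{\mathbf{x}}-\mathbf{x}\rVert_{2,q}\le\frac{2\zeta}{\beta_{q,2^{\frac{q}{q-1}}k}(A)},\qquad \lVert\hat{\mathbf{x}}-\mathbf{x}\rVert_{2,1}\le\frac{4k^{1-1/q}\zeta}{\beta_{q,2^{\frac{q}{q-1}}k}(A)}.$$ 2) If $\lVert A^T\boldsymbol{\epsilon}\rVert_{2,\infty}\le\mu$, then the solution $\hat{\mathbf{x}}$ of the block Dantzig selector $\min_{\mathbf{z}}\lVert\mathbf{z}\rVert_{2,1}$ s.t. $\lVert A^T(\mathbf{y}-A\mathbf{z})\rVert_{2,\infty}\le\mu$ obeys $$\lVert\hat{\mathbf{x}}-\mathbf{x}\rVert_{2,q}\le\frac{4k^{1-1/q}}{\beta^2_{q,2^{\frac{q}{q-1}}k}(A)}\mu,\qquad \lVert\hat{\mathbf{x}}-\mathbf{x}\rVert_{2,1}\le\frac{8k^{2-2/q}}{\beta^2_{q,2^{\frac{q}{q-1}}k}(A)}\mu.$$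 3) If $\lVert A^T\boldsymbol{\epsilon}\rVert_{2,\infty}\le\kappa\mu$ for some $\kappa\in(0,1)$, then the solution $\hat{\mathbf{x}}$ of the group lasso $\min_{\mathbf{z}}\frac12\lVert\mathbf{y}-A\mathbf{z}\rVert_2^2+\mu\lVert\mathbf{z}\rVert_{2,1}$ obeys $$\lVert\hat{\mathbf{x}}-\mathbf{x}\rVert_{2,q}\le\frac{1+\kappa}{1-\kappa}\cdot\frac{2k^{1-1/q}}{\beta^2_{q,(\frac{2}{1-\kappa})^{\frac{q}{q-1}}k}(A)}\mu,\qquad \lVert\hat{\mathbf{x}}-\mathbf{x}\rVert_{2,1}\le\frac{1+\kappa}{(1-\kappa)^2}\cdot\frac{4k^{2-2/q}}{\beta^2_{q,(\frac{2}{1-\kappa})^{\frac{q}{q-1}}k}(A)}\mu.$$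
   Context: Every $\mathbf{x}\in\mathbb{R}^N$ is partitioned into $p$ consecutive blocks of length $n$: $\mathbf{x}=[\mathbf{x}_1^T,\dots,\mathbf{x}_p^T]^T$, $\mathbf{x}_i\in\mathbb{R}^n$. Mixed norms: $\lVert\mathbf{x}\rVert_{2,0}=\#\{i:\mathbf{x}_i\ne\mathbf{0}\}$, $\lVert\mathbf{x}\rVert_{2,q}=(\sum_{i=1}^p\lVert\mathbf{x}_i\rVert_2^q)^{1/q}$ for $0<q<\infty$, $\lVert\mathbf{x}\rVert_{2,\infty}=\max_i\lVert\mathbf{x}_i\rVert_2$. For nonzero $\mathbf{x}$ and $q\in(1,\infty)$, $k_q(\mathbf{x})=\left(\lVert\mathbf{x}\rVert_{2,1}/\lVert\mathbf{x}\rVert_{2,q}\right)^{q/(q-1)}$, and $k_\infty(\mathbf{x})=\lVert\mathbf{x}\rVert_{2,1}/\lVert\mathbf{x}\rVert_{2,\infty}$. For $q\in(1,\infty]$ and real $s\ge1$, $\beta_{q,s}(A)=\min_{\mathbf{z}\ne\mathbf{0},\,k_q(\mathbf{z})\le s}\lVert A\mathbf{z}\rVert_2/\lVert\mathbf{z}\rVert_{2,q}$ (the paper defines it for $s\in[1,p]$; for $s\ge p$ the constraint is vacuous since $k_q\le p$). For $q=\infty$, $q/(q-1)$ is read as $1$ and $1/q$ as $0$. The parameters $\zeta\ge0$, $\mu>0$ are given; bounds are understood as $+\infty$ when the relevant $\beta$ is $0$. *)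

From HB Require Import structures.
From mathcomp Require Import all_boot all_order all_algebra.
From mathcomp Require Import all_classical all_reals all_analysis.
From mathcomp Require Import zify.
Set Implicit Arguments. Unset Strict Implicit. Unset Printing Implicit Defensive.
Import Order.TTheory GRing.Theory Num.Theory.
Local Open Scope ring_scope.
Local Open Scope classical_set_scope.

Section BlockNorms.
Variable R : realType.
Variables p n : nat.

Lemma bidx_proof (i : 'I_p) (j : 'I_n) : (i * n + j < p * n)%N.
Proof. have := ltn_ord i; have := ltn_ord j; nia. Qed.

(* global index of entry j of block i : i*n + j *)
Definition bidx (i : 'I_p) (j : 'I_n) : 'I_(p * n) := Ordinal (bidx_proof i j).

Definition norm2 {k : nat} (v : 'cV[R]_k) : R := Num.sqrt (\sum_(j < k) v j 0 ^+ 2).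

Definition blk (x : 'cV[R]_(p * n)) (i : 'I_p) : 'cV[R]_n := \col_(j < n) x (bidx i j) 0.

Definition bnorm (x : 'cV[R]_(p * n)) (i : 'I_p) : R := norm2 (blk x i).

Definition norm20 (x : 'cV[R]_(p * n)) : nat := #|[set i : 'I_p | blk x i != 0]|.

Definition norm21 (x : 'cV[R]_(p * n)) : R := \sum_(i < p) bnorm x i.

(* ||x||_{2,q} for q in (0, +oo] (q an extended real); -oo is junk *)
Definition norm2q (q : \bar R) (x : 'cV[R]_(p * n)) : R :=
  match q with
  | r%:E => (\sum_(i < p) bnorm x i `^ r) `^ r^-1
  | +oo%E => \big[Num.max/0]_(i < p) bnorm x i
  | -oo%E => 0
  end.

(* q/(q-1), read as 1 for q = +oo *)
Definition qconj (q : \bar R) : R :=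
  match q with r%:E => r / (r - 1) | _ => 1 end.

(* 1/q, read as 0 for q = +oo *)
Definition qinv (q : \bar R) : R :=
  match q with r%:E => r^-1 | _ => 0 end.

Definition kq (q : \bar R) (x : 'cV[R]_(p * n)) : R :=
  (norm21 x / norm2q q x) `^ qconj q.

(* beta_{q,s}(A) : the minimum (written as the infimum, which is attained) *)
Definition beta {m : nat} (q : \bar R) (s : R) (A : 'M[R]_(m, p * n)) : R :=
  inf [set norm2 (A *m z) / norm2q q z |
        z in [set z : 'cV[R]_(p * n) | z != 0 /\ kq q z <= s]].

End BlockNorms.

From HB Require Import structures.
From mathcomp Require Import all_boot all_order all_algebra.
From mathcomp Require Import all_classical all_reals all_analysis.
From mathcomp Require Import ring lra.
Import Order.TTheory GRing.Theory Num.Theory.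
Local Open Scope ring_scope.

(* With h = xh - x and S the block support of x, optimality of each estimator
   puts h in a cone ||h||_{2,1} <= C ||h_S||_{2,1}, with C = 2 for basis pursuit
   and the Dantzig selector and C = 2/(1-kappa) for the group lasso.  Hoelder's
   inequality over the at most k blocks of S gives
   ||h_S||_{2,1} <= k^(1-1/q) ||h||_{2,q}, so k_q(h) <= C^(q/(q-1)) k and the
   definition of beta yields beta ||h||_{2,q} <= ||A h||_2.  It remains to bound
   ||A h||_2 by 2 zeta, or ||A h||_2^2 = <A^T A h, h>, which is at most
   ||A^T A h||_{2,oo} ||h||_{2,1}, by a multiple of mu ||h||_{2,q}. *)

Set Implicit Arguments. Unset Strict Implicit.

Section Euclidean.
Variable R : realType.

Definition dot {d : nat} (u v : 'cV[R]_d) : R := \sum_(j < d) u j 0 * v j 0.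

Lemma dot_trmx {m d : nat} (A : 'M[R]_(m, d)) u v : dot u (A *m v) = dot (A^T *m u) v.
Proof.
have dotE d' (u' v' : 'cV[R]_d') : dot u' v' = (u'^T *m v') 0 0.
  by rewrite mxE; apply: eq_bigr => j _; rewrite mxE.
by rewrite !dotE trmx_mul trmxK mulmxA.
Qed.

Variable d : nat.
Implicit Types u v : 'cV[R]_d.

Lemma norm2_ge0 v : 0 <= norm2 v.
Proof. exact: sqrtr_ge0. Qed.

Lemma norm2_sqr v : norm2 v ^+ 2 = dot v v.
Proof.
rewrite sqr_sqrtr; last by apply: sumr_ge0 => j _; rewrite sqr_ge0.
by apply: eq_bigr => j _; rewrite expr2.
Qed.

Lemma norm2_eq0_coef v j : norm2 v = 0 -> v j 0 = 0.
Proof.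
move=> v0; have : \sum_(i < d) v i 0 ^+ 2 = 0.
  have sum_ge0 : 0 <= \sum_(i < d) v i 0 ^+ 2 by apply: sumr_ge0 => i _; rewrite sqr_ge0.
  by rewrite -(sqr_sqrtr sum_ge0) -/(norm2 v) v0 expr0n.
move=> /(psumr_eq0P (fun i _ => sqr_ge0 (v i 0))) /(_ j isT) /eqP.
by rewrite sqrf_eq0 => /eqP.
Qed.

Lemma norm2_0 : norm2 (0 : 'cV[R]_d) = 0.
Proof. by rewrite /norm2 big1 ?sqrtr0 // => j _; rewrite mxE expr0n. Qed.

Lemma norm2N v : norm2 (- v) = norm2 v.
Proof. by rewrite /norm2; congr Num.sqrt; apply: eq_bigr => j _; rewrite mxE sqrrN. Qed.

Lemma cauchy_schwarz u v : dot u v <= norm2 u * norm2 v.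
Proof.
set a := norm2 u; set b := norm2 v.
have [a0|a_neq0] := eqVneq a 0.
  by rewrite a0 mul0r /dot big1 // => j _; rewrite norm2_eq0_coef ?mul0r.
have [b0|b_neq0] := eqVneq b 0.
  by rewrite b0 mulr0 /dot big1 // => j _; rewrite (norm2_eq0_coef j b0) mulr0.
have a_gt0 : 0 < a by rewrite lt_def a_neq0 norm2_ge0.
have b_gt0 : 0 < b by rewrite lt_def b_neq0 norm2_ge0.
have : 0 <= \sum_(j < d) (b * u j 0 - a * v j 0) ^+ 2.
  by apply: sumr_ge0 => j _; rewrite sqr_ge0.
have -> : \sum_(j < d) (b * u j 0 - a * v j 0) ^+ 2
    = b ^+ 2 * dot u u - 2 * a * b * dot u v + a ^+ 2 * dot v v.
  by rewrite /dot !mulr_sumr -sumrB -big_split /=; apply: eq_bigr => j _; ring.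
rewrite -!norm2_sqr -/a -/b.
have ab_gt0 : 0 < 2 * a * b by rewrite !mulr_gt0.
nra.
Qed.

Lemma norm2D u v : norm2 (u + v) <= norm2 u + norm2 v.
Proof.
rewrite -ler_sqr ?nnegrE ?addr_ge0 ?norm2_ge0 // sqrrD !norm2_sqr.
have -> : dot (u + v) (u + v) = dot u u + 2 * dot u v + dot v v.
  by rewrite /dot mulr_sumr -!big_split /=; apply: eq_bigr => j _; rewrite !mxE; ring.
have := cauchy_schwarz u v; lra.
Qed.

Lemma norm2B u v : norm2 (u - v) <= norm2 u + norm2 v.
Proof. by rewrite -(norm2N v) norm2D. Qed.

Lemma norm2B_sqr u v :
  norm2 (u - v) ^+ 2 = norm2 u ^+ 2 - 2 * dot u v + norm2 v ^+ 2.
Proof.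
rewrite !norm2_sqr /dot mulr_sumr -sumrB -!big_split /=.
by apply: eq_bigr => j _; rewrite !mxE; ring.
Qed.

End Euclidean.

Local Notation norm2oo := (norm2q +oo%E).

Section Blocks.
Variables (R : realType) (p n : nat).
Implicit Types x g h : 'cV[R]_(p * n).

Lemma blkD x h i : blk (x + h) i = blk x i + blk h i.
Proof. by apply/matrixP => a b; rewrite !mxE. Qed.

Lemma blkB x h i : blk (x - h) i = blk x i - blk h i.
Proof. by apply/matrixP => a b; rewrite !mxE. Qed.

Lemma blk0 i : blk (0 : 'cV[R]_(p * n)) i = 0.
Proof. by apply/matrixP => a b; rewrite !mxE. Qed.

Lemma bnorm_ge0 x i : 0 <= bnorm x i.
Proof. exact: norm2_ge0. Qed.

Lemma bidx_inj : injective (fun ij : 'I_p * 'I_n => bidx ij.1 ij.2).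
Proof.
move=> [i j] [i' j'] /= /(congr1 val) /= E.
have n_gt0 : (0 < n)%N by apply: leq_ltn_trans (ltn_ord j).
have Ei : ((i * n + j) %/ n = (i' * n + j') %/ n)%N by rewrite E.
have Ej : ((i * n + j) %% n = (i' * n + j') %% n)%N by rewrite E.
rewrite !divnMDl // !divn_small // !addn0 in Ei.
rewrite !modnMDl !modn_small // in Ej.
by congr pair; apply: val_inj.
Qed.

Lemma sum_blocks (F : 'I_(p * n) -> R) :
  \sum_(l < p * n) F l = \sum_(i < p) \sum_(j < n) F (bidx i j).
Proof.
rewrite pair_big /= (reindex (fun ij : 'I_p * 'I_n => bidx ij.1 ij.2)) //=.
apply: onW_bij; apply: inj_card_bij; first exact: bidx_inj.
by rewrite card_prod !card_ord.
Qed.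

Lemma dot_blocks g h : dot g h = \sum_(i < p) dot (blk g i) (blk h i).
Proof.
rewrite /dot sum_blocks; apply: eq_bigr => i _; apply: eq_bigr => j _.
by rewrite !mxE.
Qed.

Lemma norm21_ge0 x : 0 <= norm21 x.
Proof. by apply: sumr_ge0 => i _; exact: bnorm_ge0. Qed.

Lemma bnorm_le_norm2oo x i : bnorm x i <= norm2oo x.
Proof. exact: le_bigmax. Qed.

Lemma norm2oo_ge0 x : 0 <= norm2oo x.
Proof.
by rewrite /=; elim/big_ind: _ => // [a b a_ge0 _|i _]; rewrite ?le_max ?a_ge0 ?bnorm_ge0.
Qed.

Lemma norm2ooB g h : norm2oo (g - h) <= norm2oo g + norm2oo h.
Proof.
apply: bigmax_le => [|i _]; first by rewrite addr_ge0 ?norm2oo_ge0.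
rewrite /bnorm blkB; apply: le_trans (norm2B _ _) _.
by rewrite lerD ?bnorm_le_norm2oo.
Qed.

Lemma dot_le_norm2oo_norm21 g h : dot g h <= norm2oo g * norm21 h.
Proof.
rewrite dot_blocks /norm21 mulr_sumr; apply: ler_sum => i _.
apply: le_trans (cauchy_schwarz _ _) _.
by rewrite ler_wpM2r ?bnorm_ge0 ?bnorm_le_norm2oo.
Qed.

Lemma norm2q_0 q : (1 < q)%E -> norm2q q (0 : 'cV[R]_(p * n)) = 0.
Proof.
have bnorm0 i : bnorm (0 : 'cV[R]_(p * n)) i = 0 by rewrite /bnorm blk0 norm2_0.
case: q => [r||] // q_gt1 /=; last first.
  by elim/big_ind: _ => // a b -> ->; rewrite maxxx.
have r_neq0 : r != 0 by rewrite gt_eqF //; rewrite lte_fin in q_gt1; lra.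
by rewrite big1 ?powR0 ?invr_eq0 // => i _; rewrite bnorm0 powR0.
Qed.

Lemma norm2q_ge0 q x : (1 < q)%E -> 0 <= norm2q q x.
Proof. by case: q => [r||] //= _; [exact: powR_ge0 | exact: norm2oo_ge0]. Qed.

End Blocks.

Section Holder.
Variable R : realType.

Lemma holder_card (I : finType) (S : {set I}) (f : I -> R) (r : R) :
  1 < r -> (forall i, 0 <= f i) ->
  \sum_(i in S) f i <= #|S|%:R `^ (1 - r^-1) * (\sum_i f i `^ r) `^ r^-1.
Proof.
move=> r_gt1 f_ge0; have r_gt0 : 0 < r by lra.
set s := 1 - r^-1; set c : R := #|S|%:R; set G := \sum_i f i `^ r; set T := G `^ r^-1.
have s_gt0 : 0 < s by rewrite subr_gt0 invf_lt1.
have G_ge0 : 0 <= G by apply: sumr_ge0 => i _; exact: powR_ge0.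
have [T0|T_neq0] := eqVneq T 0.
  have G0 : G = 0 by apply: powR_eq0_eq0 T0.
  rewrite T0 mulr0 big1 // => i _; apply/eqP.
  have /eqP := psumr_eq0P (fun i _ => powR_ge0 (f i) r) G0 (i := i) isT.
  by rewrite powR_eq0 (gt_eqF r_gt0) andbT.
have [/eqP|c_neq0] := eqVneq c 0.
  by rewrite pnatr_eq0 cards_eq0 => /eqP ->; rewrite big_set0 mulr_ge0 ?powR_ge0.
have T_gt0 : 0 < T by rewrite lt_def T_neq0 powR_ge0.
have c_gt0 : 0 < c by rewrite lt_def c_neq0 ler0n.
have G_gt0 : 0 < G by rewrite -[G](powRr1 G_ge0) -(mulVf (lt0r_neq0 r_gt0)) powRrM powR_gt0.
(* Young's inequality with exponents [r] and [1/s], applied to [f i / T] and [c^-s] *)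
have young i : f i / T * c `^ (- s) <= f i `^ r / G / r + s / c.
  have s_inv_gt0 : 0 < s^-1 by rewrite invr_gt0.
  have r_s_conj : r^-1 + s^-1^-1 = 1 by rewrite invrK /s addrCA subrr addr0.
  have pow_fT : (f i / T) `^ r = f i `^ r / G.
    rewrite powRM ?f_ge0 ?invr_ge0 ?(ltW T_gt0) // -(powR_inv1 (ltW T_gt0)) -powRrM mulN1r.
    by rewrite powRN -powRrM mulVf ?gt_eqF // powRr1.
  have pow_c : (c `^ (- s)) `^ s^-1 = c^-1.
    by rewrite -powRrM mulNr mulfV ?gt_eqF // powR_inv1 ?(ltW c_gt0).
  have := conjugate_powR (divr_ge0 (f_ge0 i) (ltW T_gt0)) (powR_ge0 c (- s))
    r_gt0 s_inv_gt0 r_s_conj.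
  by rewrite pow_fT pow_c invrK [c^-1 * s]mulrC.
have sum_S_le : \sum_(i in S) f i `^ r <= G.
  rewrite [leRHS](bigID (mem S)) /= lerDl.
  by apply: sumr_ge0 => i _; exact: powR_ge0.
have : (\sum_(i in S) f i) / T * c `^ (- s) <= 1.
  rewrite !mulr_suml; apply: le_trans (ler_sum _ (fun i _ => young i)) _.
  rewrite big_split /= -!mulr_suml sumr_const -mulr_natr -/c mulfK //.
  have : (\sum_(i in S) f i `^ r) / G / r <= r^-1.
    by rewrite -[leRHS]mul1r ler_pM2r ?invr_gt0 // ler_pdivrMr ?mul1r.
  rewrite /s; lra.
by rewrite powRN ler_pdivrMr ?powR_gt0 // mul1r ler_pdivrMr.
Qed.

End Holder.

Section BlockSupport.
Variables (R : realType) (p n : nat).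
Implicit Types x h : 'cV[R]_(p * n).

Definition bsupp x : {set 'I_p} := [set i | blk x i != 0].

Lemma norm20_bsupp x : norm20 x = #|bsupp x|.
Proof. by apply: eq_card => i; rewrite !inE /=; apply/idP/idP; rewrite in_setE. Qed.

Lemma norm21_bsupp x h :
  norm21 h = \sum_(i in bsupp x) bnorm h i + \sum_(i | i \notin bsupp x) bnorm h i.
Proof. by rewrite /norm21 (bigID (mem (bsupp x))). Qed.

Lemma norm21D_ge x h :
  norm21 x - \sum_(i in bsupp x) bnorm h i + \sum_(i | i \notin bsupp x) bnorm h i
  <= norm21 (x + h).
Proof.
have blk_out i : i \notin bsupp x -> blk x i = 0 by rewrite inE negbK => /eqP.
have out_x : \sum_(i | i \notin bsupp x) bnorm x i = 0.
  by rewrite big1 // => i /blk_out; rewrite /bnorm => ->; rewrite norm2_0.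
have out_xh : \sum_(i | i \notin bsupp x) bnorm (x + h) i
            = \sum_(i | i \notin bsupp x) bnorm h i.
  by apply: eq_bigr => i /blk_out; rewrite /bnorm blkD => ->; rewrite add0r.
have in_xh : \sum_(i in bsupp x) bnorm x i - \sum_(i in bsupp x) bnorm h i
             <= \sum_(i in bsupp x) bnorm (x + h) i.
  rewrite -sumrB; apply: ler_sum => i _; rewrite lerBlDr /bnorm.
  by rewrite -{1}(addrK (blk h i) (blk x i)) -blkD; exact: norm2B.
rewrite (norm21_bsupp x x) (norm21_bsupp x (x + h)); lra.
Qed.

Lemma norm21_cone x h :
  norm21 (x + h) <= norm21 x -> norm21 h <= 2 * \sum_(i in bsupp x) bnorm h i.
Proof. by have := norm21D_ge x h; rewrite (norm21_bsupp x h); lra. Qed.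

Lemma sum_bnorm_le_norm2q q h (S : {set 'I_p}) k : (1 < q)%E -> (#|S| <= k)%N ->
  \sum_(i in S) bnorm h i <= k%:R `^ (1 - qinv q) * norm2q q h.
Proof.
case: q => [r||] // q_gt1 S_le_k; last first.
  rewrite [qinv _]/= subr0 powRr1 //.
  apply: le_trans (ler_sum _ (fun i _ => bnorm_le_norm2oo h i)) _.
  by rewrite sumr_const -[_ *+ #|S|]mulr_natl ler_wpM2r ?norm2oo_ge0 ?ler_nat.
rewrite lte_fin in q_gt1; rewrite [qinv _]/= [norm2q _ _]/=.
apply: le_trans (holder_card S q_gt1 (bnorm_ge0 h)) _.
apply: ler_wpM2r; first exact: powR_ge0.
rewrite ge0_ler_powR ?nnegrE ?ler_nat //.
by rewrite subr_ge0 invf_le1; lra.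
Qed.

End BlockSupport.

Section RestrictedEigenvalue.
Variables (R : realType) (p n : nat).
Implicit Types (q : \bar R) (h : 'cV[R]_(p * n)).

Lemma qconj_gt0 q : (1 < q)%E -> 0 < qconj q.
Proof. by case: q => [r||] //=; rewrite lte_fin => r_gt1; rewrite divr_gt0 //; lra. Qed.

Lemma mul_qconj q : (1 < q)%E -> (1 - qinv q) * qconj q = 1.
Proof.
case: q => [r||] //=; last by rewrite subr0 mulr1.
rewrite lte_fin => r_gt1; have r_neq0 : r != 0 by rewrite gt_eqF //; lra.
have r1_neq0 : r - 1 != 0 by rewrite subr_eq0 gt_eqF.
by field; rewrite r_neq0 r1_neq0.
Qed.

Lemma kq_le q h k (C : R) : (1 < q)%E -> 0 < C ->
  norm21 h <= C * k%:R `^ (1 - qinv q) * norm2q q h ->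
  kq q h <= C `^ qconj q * k%:R.
Proof.
move=> q_gt1 C_gt0 h_le; rewrite /kq.
have [Q0|Q_neq0] := eqVneq (norm2q q h) 0.
  by rewrite Q0 invr0 mulr0 powR0 ?gt_eqF ?qconj_gt0 // mulr_ge0 ?powR_ge0.
have Q_gt0 : 0 < norm2q q h by rewrite lt_def Q_neq0 norm2q_ge0.
apply: (@le_trans _ _ ((C * k%:R `^ (1 - qinv q)) `^ qconj q)).
  apply: ge0_ler_powR; rewrite ?nnegrE ?(ltW (qconj_gt0 q_gt1)) //.
  - by rewrite divr_ge0 ?norm21_ge0 ?norm2q_ge0.
  - by rewrite mulr_ge0 ?powR_ge0 ?(ltW C_gt0).
  - by rewrite ler_pdivrMr.
by rewrite powRM ?powR_ge0 ?(ltW C_gt0) // -powRrM mul_qconj // powRr1.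
Qed.

Lemma beta_mul_norm2q_le {m : nat} q s (A : 'M[R]_(m, p * n)) z : (1 < q)%E ->
  kq q z <= s -> beta q s A * norm2q q z <= norm2 (A *m z).
Proof.
move=> q_gt1 z_kq.
have [Q0|Q_neq0] := eqVneq (norm2q q z) 0; first by rewrite Q0 mulr0 norm2_ge0.
have Q_gt0 : 0 < norm2q q z by rewrite lt_def Q_neq0 norm2q_ge0.
have z_neq0 : z != 0 by apply: contraNneq Q_neq0 => ->; rewrite norm2q_0.
rewrite -ler_pdivlMr //; apply: ge_inf; last by exists z.
by exists 0 => _ [w _ <-]; rewrite divr_ge0 ?norm2_ge0 ?norm2q_ge0.
Qed.

Lemma cone_error_bound {m : nat} q (A : 'M[R]_(m, p * n)) (x h : 'cV[R]_(p * n)) k (C : R) :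
  (1 < q)%E -> (norm20 x <= k)%N -> 0 < C ->
  norm21 h <= C * \sum_(i in bsupp x) bnorm h i ->
  norm21 h <= C * k%:R `^ (1 - qinv q) * norm2q q h /\
  beta q (C `^ qconj q * k%:R) A * norm2q q h <= norm2 (A *m h).
Proof.
move=> q_gt1 x_sparse C_gt0 h_cone.
have h_l1 : norm21 h <= C * k%:R `^ (1 - qinv q) * norm2q q h.
  rewrite -mulrA; apply: le_trans h_cone _; rewrite ler_pM2l //.
  by rewrite sum_bnorm_le_norm2q // -norm20_bsupp.
by split; last exact/beta_mul_norm2q_le/kq_le.
Qed.

End RestrictedEigenvalue.

Lemma ler_div_sqr (R : realFieldType) (b t N c : R) : 0 < b -> 0 <= t -> 0 <= c ->
  b * t <= N -> N ^+ 2 <= c * t -> t <= c / b ^+ 2.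
Proof.
move=> b_gt0 t_ge0 c_ge0 bt_le N_le; rewrite ler_pdivlMr ?exprn_gt0 //.
have [->|t_neq0] := eqVneq t 0; first by rewrite mul0r.
have t_gt0 : 0 < t by rewrite lt_def t_neq0.
rewrite -(ler_pM2r t_gt0); apply: le_trans _ N_le.
have -> : t * b ^+ 2 * t = (b * t) ^+ 2 by ring.
have bt_ge0 : 0 <= b * t by rewrite mulr_ge0 ?(ltW b_gt0).
by rewrite ler_sqr ?nnegrE ?(le_trans bt_ge0).
Qed.

Lemma sqr_powR (R : realType) (a e : R) : (a `^ e) ^+ 2 = a `^ (2 * e).
Proof. by rewrite mulrC powRrM powR_mulrn ?powR_ge0. Qed.

Section Estimators.
Variables (R : realType) (m p n k : nat) (A : 'M[R]_(m, p * n)).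
Variables (x : 'cV[R]_(p * n)) (eps : 'cV[R]_m) (q : \bar R).
Hypotheses (x_sparse : (norm20 x <= k)%N) (q_gt1 : (1 < q)%E).
Local Notation y := (A *m x + eps).
Local Notation K := (k%:R `^ (1 - qinv q)).
Local Notation beta_k C := (beta q (C `^ qconj q * k%:R) A).

Lemma powR_k_sqr : k%:R `^ (2 - 2 * qinv q) = K ^+ 2.
Proof. by rewrite sqr_powR mulrBr mulr1. Qed.

Lemma residualE xh : y - A *m xh = eps - A *m (xh - x).
Proof. by rewrite mulmxBr opprB addrA [eps + _]addrC. Qed.

Lemma mulmx_errorE xh : A *m (xh - x) = eps - (y - A *m xh).
Proof. by rewrite residualE opprB [RHS]addrC subrK. Qed.

Lemma l1_descent_error xh : norm21 xh <= norm21 x ->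
  norm21 (xh - x) <= 2 * K * norm2q q (xh - x) /\
  beta_k 2 * norm2q q (xh - x) <= norm2 (A *m (xh - x)).
Proof.
move=> l1_le; apply: (cone_error_bound A q_gt1 x_sparse); first by rewrite ltr0n.
by apply: norm21_cone; rewrite addrC subrK.
Qed.

Lemma basis_pursuit_error zeta xh :
  norm2 eps <= zeta -> norm2 (y - A *m xh) <= zeta -> norm21 xh <= norm21 x ->
  0 < beta_k 2 ->
  norm2q q (xh - x) <= 2 * zeta / beta_k 2 /\
  norm21 (xh - x) <= 4 * K * zeta / beta_k 2.
Proof.
move=> eps_le res_le l1_le b_gt0.
have [l1_bound beta_bound] := l1_descent_error l1_le.
have Ah_le : norm2 (A *m (xh - x)) <= 2 * zeta.
  rewrite mulmx_errorE; apply: le_trans (norm2B _ _) _; lra.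
have Q_le : norm2q q (xh - x) <= 2 * zeta / beta_k 2.
  by rewrite ler_pdivlMr // mulrC (le_trans beta_bound).
split => //; apply: le_trans l1_bound _.
rewrite (_ : 4 * K * zeta / _ = 2 * K * (2 * zeta / beta_k 2)); last by ring.
by rewrite ler_wpM2l ?mulr_ge0 ?powR_ge0.
Qed.

Lemma dantzig_selector_error mu xh :
  norm2oo (A^T *m eps) <= mu -> norm2oo (A^T *m (y - A *m xh)) <= mu ->
  norm21 xh <= norm21 x -> 0 < beta_k 2 ->
  norm2q q (xh - x) <= 4 * K / beta_k 2 ^+ 2 * mu /\
  norm21 (xh - x) <= 8 * k%:R `^ (2 - 2 * qinv q) / beta_k 2 ^+ 2 * mu.
Proof.
move=> eps_le res_le l1_le b_gt0.
have [l1_bound beta_bound] := l1_descent_error l1_le.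
have mu_ge0 : 0 <= mu by apply: le_trans eps_le; exact: norm2oo_ge0.
have K_ge0 : 0 <= K by exact: powR_ge0.
have AtAh_le : norm2oo (A^T *m (A *m (xh - x))) <= 2 * mu.
  by rewrite mulmx_errorE mulmxBr; apply: le_trans (norm2ooB _ _) _; lra.
have Ah_sqr : norm2 (A *m (xh - x)) ^+ 2 <= 4 * K * mu * norm2q q (xh - x).
  rewrite norm2_sqr dot_trmx; apply: le_trans (dot_le_norm2oo_norm21 _ _) _.
  apply: le_trans (ler_pM (norm2oo_ge0 _) (norm21_ge0 _) AtAh_le l1_bound) _.
  by rewrite (_ : 2 * mu * _ = 4 * K * mu * norm2q q (xh - x)) //; ring.
have c_ge0 : 0 <= 4 * K * mu by rewrite !mulr_ge0.
have Q_le := ler_div_sqr b_gt0 (norm2q_ge0 _ q_gt1) c_ge0 beta_bound Ah_sqr.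
split; first by rewrite mulrAC.
rewrite powR_k_sqr; apply: le_trans l1_bound _.
rewrite (_ : 8 * K ^+ 2 / _ * mu = 2 * K * (4 * K * mu / beta_k 2 ^+ 2)); last by ring.
by rewrite ler_wpM2l ?mulr_ge0.
Qed.

Lemma group_lasso_basic_ineq kappa mu xh : 0 <= mu ->
  norm2oo (A^T *m eps) <= kappa * mu ->
  2^-1 * norm2 (y - A *m xh) ^+ 2 + mu * norm21 xh
    <= 2^-1 * norm2 (y - A *m x) ^+ 2 + mu * norm21 x ->
  2^-1 * norm2 (A *m (xh - x)) ^+ 2 <=
    mu * ((1 + kappa) * \sum_(i in bsupp x) bnorm (xh - x) i
          - (1 - kappa) * \sum_(i | i \notin bsupp x) bnorm (xh - x) i).
Proof.
move=> mu_ge0 eps_le.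
set a := \sum_(i in bsupp x) bnorm (xh - x) i.
set d := \sum_(i | i \notin bsupp x) bnorm (xh - x) i.
have l1_h : norm21 (xh - x) = a + d by exact: norm21_bsupp.
have l1_gap : mu * (norm21 x - norm21 xh) <= mu * (a - d).
  have := norm21D_ge x (xh - x); rewrite [x + _]addrC subrK -/a -/d => gap.
  by rewrite ler_wpM2l //; lra.
have corr : dot eps (A *m (xh - x)) <= kappa * mu * (a + d).
  rewrite dot_trmx -l1_h; apply: le_trans (dot_le_norm2oo_norm21 _ _) _.
  by rewrite ler_wpM2r ?norm21_ge0.
rewrite !residualE subrr mulmx0 subr0 norm2B_sqr.
have : kappa * mu * (a + d) + mu * (a - d) = mu * ((1 + kappa) * a - (1 - kappa) * d).
  by ring.
lra.
Qed.

Lemma group_lasso_cone kappa mu xh : 0 < mu -> kappa < 1 ->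
  norm2oo (A^T *m eps) <= kappa * mu ->
  2^-1 * norm2 (y - A *m xh) ^+ 2 + mu * norm21 xh
    <= 2^-1 * norm2 (y - A *m x) ^+ 2 + mu * norm21 x ->
  norm21 (xh - x) <= 2 / (1 - kappa) * \sum_(i in bsupp x) bnorm (xh - x) i /\
  norm2 (A *m (xh - x)) ^+ 2
    <= 2 * (1 + kappa) * mu * \sum_(i in bsupp x) bnorm (xh - x) i.
Proof.
move=> mu_gt0 kappa_lt1 eps_le lasso_le.
have basic := group_lasso_basic_ineq (ltW mu_gt0) eps_le lasso_le.
set a := \sum_(i in bsupp x) bnorm (xh - x) i in basic *.
set d := \sum_(i | i \notin bsupp x) bnorm (xh - x) i in basic.
have kappa1_gt0 : 0 < 1 - kappa by rewrite subr_gt0.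
have d_ge0 : 0 <= d by apply: sumr_ge0 => i _; exact: bnorm_ge0.
have cone_ad : (1 - kappa) * d <= (1 + kappa) * a.
  have : 0 <= mu * ((1 + kappa) * a - (1 - kappa) * d).
    by apply: le_trans basic; rewrite mulr_ge0 ?sqr_ge0 ?invr_ge0.
  by rewrite pmulr_rge0 // subr_ge0.
split.
  rewrite (norm21_bsupp x) -/a -/d mulrAC ler_pdivlMr //.
  have : (a + d) * (1 - kappa) = (1 - kappa) * a + (1 - kappa) * d by ring.
  lra.
have : 0 <= mu * (1 - kappa) * d by rewrite !mulr_ge0 ?(ltW mu_gt0) ?(ltW kappa1_gt0).
have : mu * ((1 + kappa) * a - (1 - kappa) * d)
       = 2^-1 * (2 * (1 + kappa) * mu * a) - mu * (1 - kappa) * d by field.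
lra.
Qed.

Lemma group_lasso_error kappa mu xh : 0 < mu -> 0 < kappa < 1 ->
  norm2oo (A^T *m eps) <= kappa * mu ->
  2^-1 * norm2 (y - A *m xh) ^+ 2 + mu * norm21 xh
    <= 2^-1 * norm2 (y - A *m x) ^+ 2 + mu * norm21 x ->
  0 < beta_k (2 / (1 - kappa)) ->
  norm2q q (xh - x) <=
    (1 + kappa) / (1 - kappa) * (2 * K / beta_k (2 / (1 - kappa)) ^+ 2) * mu /\
  norm21 (xh - x) <=
    (1 + kappa) / (1 - kappa) ^+ 2 *
      (4 * k%:R `^ (2 - 2 * qinv q) / beta_k (2 / (1 - kappa)) ^+ 2) * mu.
Proof.
move=> mu_gt0 /andP[kappa_gt0 kappa_lt1] eps_le lasso_le b_gt0.
have [h_cone Ah_sqr_a] := group_lasso_cone mu_gt0 kappa_lt1 eps_le lasso_le.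
set C := 2 / (1 - kappa) in b_gt0 h_cone *; set b := beta_k C in b_gt0 *.
set Q := norm2q q (xh - x).
have kappa1_gt0 : 0 < 1 - kappa by rewrite subr_gt0.
have C_gt0 : 0 < C by rewrite divr_gt0.
have [l1_bound beta_bound] := cone_error_bound A q_gt1 x_sparse C_gt0 h_cone.
have K_ge0 : 0 <= K by exact: powR_ge0.
set W := 2 * (1 + kappa) * K * mu.
have W_ge0 : 0 <= W by rewrite /W !mulr_ge0 ?(ltW mu_gt0) //; lra.
have Ah_sqr : norm2 (A *m (xh - x)) ^+ 2 <= W * Q.
  apply: le_trans Ah_sqr_a _.
  rewrite (_ : W * Q = 2 * (1 + kappa) * mu * (K * Q)); last by rewrite /W; ring.
  apply: ler_wpM2l; first by rewrite !mulr_ge0 ?(ltW mu_gt0) //; lra.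
  by rewrite sum_bnorm_le_norm2q // -norm20_bsupp.
have Q_le := ler_div_sqr b_gt0 (norm2q_ge0 _ q_gt1) W_ge0 beta_bound Ah_sqr.
have le_div_1Bkappa t : 0 <= t -> t <= t / (1 - kappa).
  by move=> t_ge0; rewrite ler_pdivlMr // ler_piMr //; lra.
have b_neq0 : b != 0 by rewrite gt_eqF.
have kappa1_neq0 : 1 - kappa != 0 by rewrite gt_eqF.
have -> : (1 + kappa) / (1 - kappa) * (2 * K / b ^+ 2) * mu = W / b ^+ 2 / (1 - kappa).
  by rewrite /W; field; rewrite b_neq0 kappa1_neq0.
have -> : (1 + kappa) / (1 - kappa) ^+ 2 * (4 * k%:R `^ (2 - 2 * qinv q) / b ^+ 2) * mu
          = C * K * (W / b ^+ 2) / (1 - kappa).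
  by rewrite powR_k_sqr /W /C; field; rewrite b_neq0 kappa1_neq0.
have Wb_ge0 : 0 <= W / b ^+ 2 by rewrite divr_ge0 ?sqr_ge0.
split; first exact: le_trans Q_le (le_div_1Bkappa _ Wb_ge0).
have CK_ge0 : 0 <= C * K by rewrite mulr_ge0 // ltW.
apply: le_trans l1_bound (le_trans (ler_wpM2l CK_ge0 Q_le) _).
exact: le_div_1Bkappa (mulr_ge0 CK_ge0 Wb_ge0).
Qed.

End Estimators.

Theorem theorem1 (R : realType) (m p n k : nat) (A : 'M[R]_(m, p * n))
  (x : 'cV[R]_(p * n)) (eps : 'cV[R]_m) (zeta mu kappa : R) (q : \bar R) :
  (0 < k)%N -> (norm20 x <= k)%N ->
  0 <= zeta -> 0 < mu -> (1 < q)%E ->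
  let y := A *m x + eps in
  let h := fun xh : 'cV[R]_(p * n) => xh - x in
  let b := beta q (2 `^ qconj q * k%:R) A in
  let bl := beta q ((2 / (1 - kappa)) `^ qconj q * k%:R) A in
  (* 1) block basis pursuit *)
  (norm2 eps <= zeta ->
   forall xh : 'cV[R]_(p * n),
     norm2 (y - A *m xh) <= zeta ->
     (forall z : 'cV[R]_(p * n), norm2 (y - A *m z) <= zeta ->
        norm21 xh <= norm21 z) ->
     0 < b ->
     norm2q q (h xh) <= 2 * zeta / b /\
     norm21 (h xh) <= 4 * k%:R `^ (1 - qinv q) * zeta / b) /\
  (* 2) block Dantzig selector *)
  (norm2q +oo%E (A^T *m eps) <= mu ->
   forall xh : 'cV[R]_(p * n),
     norm2q +oo%E (A^T *m (y - A *m xh)) <= mu ->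
     (forall z : 'cV[R]_(p * n), norm2q +oo%E (A^T *m (y - A *m z)) <= mu ->
        norm21 xh <= norm21 z) ->
     0 < b ->
     norm2q q (h xh) <= 4 * k%:R `^ (1 - qinv q) / b ^+ 2 * mu /\
     norm21 (h xh) <= 8 * k%:R `^ (2 - 2 * qinv q) / b ^+ 2 * mu) /\
  (* 3) group lasso *)
  (0 < kappa < 1 ->
   norm2q +oo%E (A^T *m eps) <= kappa * mu ->
   forall xh : 'cV[R]_(p * n),
     (forall z : 'cV[R]_(p * n),
        2^-1 * norm2 (y - A *m xh) ^+ 2 + mu * norm21 xh
        <= 2^-1 * norm2 (y - A *m z) ^+ 2 + mu * norm21 z) ->
     0 < bl ->
     norm2q q (h xh) <=
       (1 + kappa) / (1 - kappa) * (2 * k%:R `^ (1 - qinv q) / bl ^+ 2) * mu /\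
     norm21 (h xh) <=
       (1 + kappa) / (1 - kappa) ^+ 2 * (4 * k%:R `^ (2 - 2 * qinv q) / bl ^+ 2) * mu).
Proof.
move=> _ x_sparse _ mu_gt0 q_gt1 y h b bl.
have resid_x : y - A *m x = eps by rewrite /y addrAC subrr add0r.
split; [|split].
- move=> eps_le xh res_le xh_opt b_gt0.
  by apply: (basis_pursuit_error (eps := eps)) => //; apply: xh_opt; rewrite resid_x.
- move=> eps_le xh res_le xh_opt b_gt0.
  by apply: (dantzig_selector_error (eps := eps)) => //; apply: xh_opt; rewrite resid_x.
- by move=> kappa01 eps_le xh xh_opt b_gt0; apply: (group_lasso_error (eps := eps)).
Qed.
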